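(* Let $f(1),\dots,f(T)\in\mathbb R$ and $0=\nu_0<\nu_1<\dots<\nu_M=T$ be such that $f(\nu_m+1)=\dots=f(\nu_{m+1})$ for all $m=0,\dots,M-1$. Let $\Delta$ be a positive integer and suppose that for some $1\le m\le M-1$, $|\nu_m-\nu_{m'}|\ge\Delta$ for all $m'\ne m$. Then, writing $\nu=\nu_m$, \[ \max\Bigl\{\Bigl|\sum_{r=1}^{\nu-\Delta}f(r)\Bigr|,\ \Bigl|\sum_{r=1}^{\nu}f(r)\Bigr|,\ \Bigl|\sum_{r=1}^{\nu+\Delta}f(r)\Bigr|\Bigr\}\ \ge\ \Delta\,|f(\nu)-f(\nu+1)|/4. \]
   Context: An empty sum equals $0$. *)

From HB Require Import structures.
From mathcomp Require Import all_boot all_order all_algebra.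
Set Implicit Arguments. Unset Strict Implicit. Unset Printing Implicit Defensive.

From HB Require Import structures.
From mathcomp Require Import all_boot all_order all_algebra.
From mathcomp Require Import zify ring lra.
Set Implicit Arguments. Unset Strict Implicit. Unset Printing Implicit Defensive.
Import Order.TTheory GRing.Theory Num.Theory.
Local Open Scope ring_scope.

(* Separation makes the blocks ending and starting at nu at least Delta long,
   so f is constant on (nu - Delta, nu] and on (nu, nu + Delta].  With S0, S1,
   S2 the partial sums up to nu - Delta, nu and nu + Delta, this gives
   Delta |f(nu) - f(nu+1)| = |2 S1 - S0 - S2|, which is at most four times the
   largest of |S0|, |S1|, |S2|. *)

Lemma second_difference_le_max_norm (R : realFieldType) (x y z : R) :
  `|2 * y - x - z| / 4%:R <= Num.max `|x| (Num.max `|y| `|z|).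
Proof.
set mx := Num.max _ _.
have hx : `|x| <= mx by rewrite /mx le_max lexx.
have hy : `|y| <= mx by rewrite /mx !le_max lexx orbT.
have hz : `|z| <= mx by rewrite /mx !le_max lexx !orbT.
move: hx hy hz; rewrite !ler_norml => /andP[? ?] /andP[? ?] /andP[? ?].
rewrite ler_pdivrMr ?ltr0n // ler_norml; apply/andP; split; lra.
Qed.

Lemma partial_sum_extend_const (R : nmodType) (f : nat -> R) (c : R) (k n : nat) :
  (forall r, (k < r <= k + n)%N -> f r = c) ->
  \sum_(1 <= r < (k + n).+1) f r = \sum_(1 <= r < k.+1) f r + c *+ n.
Proof.
move=> f_const.
rewrite (@big_cat_nat _ _ _ k.+1) ?leq_addr //=; congr (_ + _).
rewrite (eq_big_nat _ _ (F2 := fun => c)); last by move=> r /f_const.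
by rewrite sumr_const_nat subSS addKn.
Qed.

Lemma jump_le_max_partial_sums (R : realFieldType) (f : nat -> R)
    (nu Delta : nat) (a b : R) :
  (Delta <= nu)%N ->
  (forall r, (nu - Delta < r <= nu)%N -> f r = a) ->
  (forall r, (nu < r <= nu + Delta)%N -> f r = b) ->
  Delta%:R * `|a - b| / 4%:R <=
  Num.max `|\sum_(1 <= r < (nu - Delta).+1) f r|
    (Num.max `|\sum_(1 <= r < nu.+1) f r|
             `|\sum_(1 <= r < (nu + Delta).+1) f r|).
Proof.
move=> le_Delta_nu f_left f_right.
have sum_left : \sum_(1 <= r < nu.+1) f r =
    \sum_(1 <= r < (nu - Delta).+1) f r + a *+ Delta.
  by rewrite -{1}(subnK le_Delta_nu) (partial_sum_extend_const (c := a)) // subnK.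
rewrite (partial_sum_extend_const (c := b)) // sum_left.
set S0 := \sum_(1 <= r < _) f r.
have -> : Delta%:R * `|a - b| =
    `|2 * (S0 + a *+ Delta) - S0 - (S0 + a *+ Delta + b *+ Delta)|.
  by rewrite -[X in X * _]normr_nat -normrM; congr `|_|; ring.
exact: second_difference_le_max_norm.
Qed.

Theorem lemma21 (R : realFieldType) (T M : nat) (f : nat -> R) (nu : nat -> nat)
  (Delta m : nat)
  (hnu0 : nu 0%N = 0%N)
  (hnuM : nu M = T)
  (hinc : forall k : nat, (k < M)%N -> (nu k < nu k.+1)%N)
  (hconst : forall k r : nat, (k < M)%N -> (nu k < r <= nu k.+1)%N ->
            f r = f (nu k).+1)
  (hDelta : (0 < Delta)%N)
  (hm : (1 <= m <= M.-1)%N)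
  (hsep : forall m' : nat, (m' <= M)%N -> m' <> m ->
          (Delta <= `|(nu m)%:Z - (nu m')%:Z|)%N) :
  Num.max `|\sum_(1 <= r < (nu m - Delta).+1) f r|
    (Num.max `|\sum_(1 <= r < (nu m).+1) f r|
             `|\sum_(1 <= r < (nu m + Delta).+1) f r|)
  >= Delta%:R * `|f (nu m) - f (nu m).+1| / 4%:R.
Proof.
have lt_m_M : (m < M)%N by lia.
have same_block k r s : (k < M)%N ->
    (nu k < r <= nu k.+1)%N -> (nu k < s <= nu k.+1)%N -> f r = f s.
  by move=> lt_k_M hr hs; rewrite (hconst k r) ?(hconst k s).
have m_pos : (0 < m)%N by lia.
have lt_prev : (nu m.-1 < nu m)%N by rewrite -{2}(prednK m_pos) hinc //; lia.
have lt_next := hinc m lt_m_M.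
have gap_prev : (Delta <= nu m - nu m.-1)%N by have := hsep m.-1; lia.
have gap_next : (Delta <= nu m.+1 - nu m)%N by have := hsep m.+1; lia.
apply: jump_le_max_partial_sums; first by lia.
- move=> r hr; apply: (same_block m.-1); rewrite ?prednK //; lia.
- by move=> r hr; apply: (same_block m); lia.
Qed.
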